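(* Let $N\ge 1$, let $K^{(1)},\ldots,K^{(N)}$ be positive integers, let $L=\sum_{i=1}^N K^{(i)}$, and let $M\ge 1$. For each $i$, let $P^{(i)}\in\{0,1\}^{K^{(i)}\times M}$ be a row-partial permutation matrix, let $P\in\mathbb{R}^{L\times M}$ be the vertical stacking of $P^{(1)},\ldots,P^{(N)}$, and set $Q:=PP^{\top}\in\mathbb{R}^{L\times L}$ (uncorrupted data; the cost matrix is $C=-Q$). Consider the following three optimization problems over symmetric $X\in\mathbb{R}^{L\times L}$ (blocks $X^{(i,j)}\in\mathbb{R}^{K^{(i)}\times K^{(j)}}$ indexed conformally with $P$): (i) (strong SDP) maximize $\mathrm{Tr}[QX]$ subject to $X^{(i,i)}=\mathbf{I}_{K^{(i)}}$ for $i=1,\ldots,N$ and $X\succeq 0$; (ii) (weak SDP) maximize $\mathrm{Tr}[QX]$ subject to $\mathrm{diag}(X)=\mathbf{1}_L$, $\mathrm{Tr}\big[X^{(i,i)}\tfrac{\mathbf{1}_{K^{(i)}}\mathbf{1}_{K^{(i)}}^{\top}}{K^{(i)}}\big]=1$ for $i=1,\ldots,N$, and $X\succeq 0$; (iii) (GW-type SDP) maximize $\mathrm{Tr}[QX]$ subject to $\mathrm{diag}(X)=\mathbf{1}_L$ and $X\succeq 0$. Then $X^{\star}:=Q$ is an optimal solution of each of (i), (ii), (iii). Moreover, for each of these problems, among all of its optimal solutions $X$, $X^{\star}$ minimizes $S(X)$.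
   Context: A row-partial permutation matrix $P^{(i)}\in\{0,1\}^{K^{(i)}\times M}$ is a matrix consisting of a subset of rows of an $M\times M$ permutation matrix, i.e., each row contains exactly one $1$ and each column contains at most one $1$. $\mathbf{1}_n$ is the all-ones vector in $\mathbb{R}^n$ and $\mathbf{I}_n$ the $n\times n$ identity. For a positive semidefinite matrix $X$, the von Neumann entropy functional is $S(X):=\mathrm{Tr}[X\log X]-\mathrm{Tr}[X]$ (with the convention $0\log 0=0$ on the eigenvalues). *)

From HB Require Import structures.
From mathcomp Require Import all_boot all_order all_algebra.
From mathcomp Require Import all_classical all_reals all_analysis.
Set Implicit Arguments. Unset Strict Implicit. Unset Printing Implicit Defensive.
Import Order.TTheory GRing.Theory Num.Theory.
Local Open Scope ring_scope.

(* Row-partial permutation matrix: rows of an M x M permutation matrix,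
   i.e. A = \matrix_(r,c) [f r == c] with f injective (each row exactly one 1,
   each column at most one 1). *)
Definition row_partial_perm (R : realType) (k m : nat) (A : 'M[R]_(k, m)) :=
  exists f : 'I_k -> 'I_m, injective f /\
    A = \matrix_(r, c) (f r == c)%:R.

Definition psd (R : realType) (n : nat) (X : 'M[R]_n) :=
  X^T = X /\ forall v : 'cV[R]_n, 0 <= (v^T *m X *m v) 0 0.

Definition eigdecomp (R : realType) (n : nat) (X : 'M[R]_n)
    (d : 'rV[R]_n) :=
  exists U : 'M[R]_n, U *m U^T = 1%:M /\ X = U^T *m diag_mx d *m U.

(* a (chosen) vector of eigenvalues of X, when an orthogonal
   eigendecomposition exists *)
Definition eigvals (R : realType) (n : nat) (X : 'M[R]_n) : 'rV[R]_n :=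
  xget 0 [set d | eigdecomp X d].

Definition xlogx (R : realType) (x : R) : R :=
  if x == 0 then 0 else x * ln x.

(* von Neumann entropy functional S(X) = Tr[X log X] - Tr[X], computed on
   the eigenvalues (with 0 log 0 = 0). *)
Definition vN_S (R : realType) (n : nat) (X : 'M[R]_n) : R :=
  \sum_(l < n) (xlogx (eigvals X 0 l) - eigvals X 0 l).

Definition strong_feas (R : realType) (N : nat) (K : 'I_N -> nat)
    (X : 'M[R]_(\sum_i K i)) :=
  (forall i, submxblock X i i = 1%:M) /\ psd X.

Definition weak_feas (R : realType) (N : nat) (K : 'I_N -> nat)
    (X : 'M[R]_(\sum_i K i)) :=
  (forall l, X l l = 1) /\
  (forall i, \tr (submxblock X i i *m const_mx (1 / (K i)%:R)) = 1) /\
  psd X.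

Definition gw_feas (R : realType) (N : nat) (K : 'I_N -> nat)
    (X : 'M[R]_(\sum_i K i)) :=
  (forall l, X l l = 1) /\ psd X.

Definition optimal_min_entropy (R : realType) (n : nat)
    (feas : 'M[R]_n -> Prop) (Q Xs : 'M[R]_n) :=
  [/\ feas Xs,
      (forall X, feas X -> \tr (Q *m X) <= \tr (Q *m Xs)) &
      (forall X, feas X -> \tr (Q *m X) = \tr (Q *m Xs) -> vN_S Xs <= vN_S X)].

(* Write Q = P P^T, where P is the 0/1 matrix of the labelling g that sends
   each of the L stacked rows to the column of its 1, so that Q_ab = [g a = g b].
   Every matrix feasible for one of the three problems is PSD with unit
   diagonal, hence has entries at most 1; therefore
   Tr[QX] = sum_{g a = g b} X_ab <= Tr[QQ], with equality iff X_ab = 1 whenever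
   g a = g b, and Q is feasible for all three problems.
   For the entropy, diagonalize orthogonally (U, eigenvalues d) and put
   w_jk = (UP)_kj^2 / c_j, where c_j is the size of the fibre of j.  Each row
   of w sums to 1 (or 0, for an empty fibre) and, by Cauchy-Schwarz, each column
   to at most 1.  The eigenvalues of Q are the averages sum_j w_jk c_j, while for
   an optimal X the fibre sizes are the averages c_j = sum_k w_jk d_k of its
   eigenvalues, and comparing traces shows that the columns of w have mass 1 on
   the support of d.  Jensen's inequality for phi(x) = x log x - x, which
   vanishes at 0, then gives S(Q) <= sum_j phi(c_j) <= S(X).  The real spectral
   theorem behind S is proved by induction, splitting off a real eigenvector
   with a Householder reflection. *)

From HB Require Import structures.
From mathcomp Require Import all_boot all_order all_algebra.
From mathcomp Require Import all_classical all_reals all_analysis.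
From mathcomp Require Import ring lra.
From mathcomp Require complex.

Set Implicit Arguments. Unset Strict Implicit. Unset Printing Implicit Defensive.
Import Order.TTheory GRing.Theory Num.Theory.
Local Open Scope ring_scope.

Lemma delta_mx_quad (R : pzRingType) n (X : 'M[R]_n) (i j : 'I_n) :
  ((delta_mx i 0 : 'cV[R]_n)^T *m X *m (delta_mx j 0 : 'cV[R]_n)) 0 0 = X i j.
Proof. by rewrite trmx_delta -rowE -colE !mxE. Qed.

Lemma trmx_mul_self_diag (R : pzSemiRingType) m n (B : 'M[R]_(m, n)) j :
  (B^T *m B) j j = \sum_k B k j ^+ 2.
Proof. by rewrite mxE; apply: eq_bigr => k _; rewrite mxE expr2. Qed.

Lemma mul_trmx_self_diag (R : pzSemiRingType) m n (B : 'M[R]_(m, n)) i :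
  (B *m B^T) i i = \sum_k B i k ^+ 2.
Proof. by rewrite mxE; apply: eq_bigr => k _; rewrite mxE expr2. Qed.

Lemma diag_quad_diag (R : comPzSemiRingType) m n (B : 'M[R]_(m, n)) (d : 'rV[R]_m) j :
  (B^T *m diag_mx d *m B) j j = \sum_k B k j ^+ 2 * d 0 k.
Proof.
rewrite mxE; apply: eq_bigr => k _; rewrite mxE (bigD1 k) //= big1 ?addr0.
  by rewrite !mxE eqxx mulr1n expr2 mulrAC.
by move=> i /negPf ik; rewrite !mxE ik mulr0n mulr0.
Qed.

Lemma mulmx_trmx_ge0 (R : realDomainType) n (x : 'rV[R]_n) : 0 <= (x *m x^T) 0 0.
Proof. by rewrite mxE; apply: sumr_ge0 => k _; rewrite mxE -expr2 sqr_ge0. Qed.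

Lemma mulmx_trmx_eq0 (R : realDomainType) n (x : 'rV[R]_n) :
  ((x *m x^T) 0 0 == 0) = (x == 0).
Proof.
apply/idP/eqP => [|->]; last by rewrite mul0mx mxE.
rewrite mxE psumr_eq0 => [/allP x0|k _]; last by rewrite mxE -expr2 sqr_ge0.
apply/rowP => k; have := x0 k (mem_index_enum k).
by rewrite !mxE -expr2 sqrf_eq0 => /eqP.
Qed.

Lemma weighted_sqr_sum_le (R : realDomainType) (I : finType) (w u : I -> R) :
  (forall i, 0 <= w i) ->
  (\sum_i w i * u i) ^+ 2 <= (\sum_i w i) * \sum_i w i * u i ^+ 2.
Proof.
move=> w_ge0; set S := \sum_i w i; set S1 := \sum_i w i * u i.
set S2 := \sum_i w i * u i ^+ 2.
have : 0 <= \sum_i \sum_j w i * w j * (u i - u j) ^+ 2.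
  apply: sumr_ge0 => i _; apply: sumr_ge0 => j _.
  by rewrite mulr_ge0 ?sqr_ge0 ?mulr_ge0.
have -> : \sum_i \sum_j w i * w j * (u i - u j) ^+ 2 = 2 * (S * S2 - S1 ^+ 2).
  rewrite (eq_bigr (fun i => w i * u i ^+ 2 * S + w i * S2 - 2 * (w i * u i) * S1)).
    by rewrite !big_split sumrN /= -!mulr_suml -mulr_sumr -/S -/S1 -/S2; ring.
  move=> i _; rewrite /S /S1 /S2 !mulr_sumr -big_split -sumrB /=.
  by apply: eq_bigr => j _; ring.
by rewrite pmulr_rge0 // subr_ge0.
Qed.

Section RealSpectral.
Variable R : rcfType.
Import complex.
Local Notation C := (complex.complex R).
Local Notation Re := (@complex.Re R).
Local Notation Im := (@complex.Im R).

Lemma Re_sum I (r : seq I) (P : pred I) (F : I -> C) :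
  Re (\sum_(i <- r | P i) F i) = \sum_(i <- r | P i) Re (F i).
Proof. by apply: (big_morph Re) => // -[? ?] []. Qed.

Lemma Im_sum I (r : seq I) (P : pred I) (F : I -> C) :
  Im (\sum_(i <- r | P i) F i) = \sum_(i <- r | P i) Im (F i).
Proof. by apply: (big_morph Im) => // -[? ?] []. Qed.

Lemma map_Re_mulmx m n p (v : 'M[C]_(m, n)) (A : 'M[R]_(n, p)) :
  map_mx Re (v *m map_mx (real_complex R) A) = map_mx Re v *m A.
Proof.
apply/matrixP => i j; rewrite !mxE Re_sum; apply: eq_bigr => k _.
by rewrite !mxE; case: (v i k) => a b /=; rewrite mulr0 subr0.
Qed.

Lemma map_Im_mulmx m n p (v : 'M[C]_(m, n)) (A : 'M[R]_(n, p)) :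
  map_mx Im (v *m map_mx (real_complex R) A) = map_mx Im v *m A.
Proof.
apply/matrixP => i j; rewrite !mxE Im_sum; apply: eq_bigr => k _.
by rewrite !mxE; case: (v i k) => a b /=; rewrite mulr0 add0r.
Qed.

Lemma map_Re_scale m n (a : C) (v : 'M[C]_(m, n)) :
  map_mx Re (a *: v) = Re a *: map_mx Re v - Im a *: map_mx Im v.
Proof. by apply/matrixP => i j; rewrite !mxE; case: a (v i j) => ? ? []. Qed.

Lemma map_Im_scale m n (a : C) (v : 'M[C]_(m, n)) :
  map_mx Im (a *: v) = Im a *: map_mx Re v + Re a *: map_mx Im v.
Proof.
by apply/matrixP => i j; rewrite !mxE; case: a (v i j) => ? ? [] ? ? /=; rewrite addrC.
Qed.

Lemma map_Re_Im_eq0 m n (v : 'M[C]_(m, n)) :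
  map_mx Re v = 0 -> map_mx Im v = 0 -> v = 0.
Proof.
move=> /matrixP vRe /matrixP vIm; apply/matrixP => i j.
by move: (vRe i j) (vIm i j); rewrite !mxE; case: (v i j) => ? ? /= -> ->.
Qed.

Lemma symmetric_eigenvector n (A : 'M[R]_n.+1) : A^T = A ->
  exists (l : R) (u : 'rV[R]_n.+1), u != 0 /\ u *m A = l *: u.
Proof.
move=> symA.
have [a /eigenvalueP [v vA v_neq0]] :=
  eigenvalue_closed (map_mx (real_complex R) A) (ltn0Sn n).
set x := map_mx Re v; set y := map_mx Im v.
have xA : x *m A = Re a *: x - Im a *: y by rewrite -map_Re_mulmx vA map_Re_scale.
have yA : y *m A = Im a *: x + Re a *: y by rewrite -map_Im_mulmx vA map_Im_scale.
(* By symmetry of A, x A y^T = y A x^T, which forces Im a (|x|^2 + |y|^2) = 0. *)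
have Im_a0 : Im a = 0.
  have norm_gt0 : 0 < (x *m x^T) 0 0 + (y *m y^T) 0 0.
    rewrite lt_def paddr_eq0 ?mulmx_trmx_ge0 // negb_and !mulmx_trmx_eq0.
    rewrite addr_ge0 ?mulmx_trmx_ge0 // andbT -negb_and.
    apply: contraNN v_neq0 => /andP[/eqP x0 /eqP y0].
    by rewrite (map_Re_Im_eq0 x0 y0).
  have sym_form : (x *m A *m y^T) 0 0 = (y *m A *m x^T) 0 0.
    rewrite [y *m A *m x^T](_ : _ = (x *m A *m y^T)^T) ?mxE //.
    by rewrite !trmx_mul trmxK symA mulmxA.
  have xy : (x *m y^T) 0 0 = (y *m x^T) 0 0.
    by rewrite [y *m x^T](_ : _ = (x *m y^T)^T) ?mxE // trmx_mul trmxK.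
  move: sym_form xy norm_gt0; rewrite xA yA mulmxBl !mulmxDl -!scalemxAl.
  rewrite !mxE => E xy_sym pos.
  by apply: (mulIf (lt0r_neq0 pos)); rewrite mul0r; nra.
have [x0|x_neq0] := eqVneq x 0.
  exists (Re a), y; split; last by rewrite yA Im_a0 scale0r add0r.
  by apply: contraNneq v_neq0 => y0; rewrite (map_Re_Im_eq0 x0 y0).
by exists (Re a), x; rewrite xA Im_a0 scale0r subr0.
Qed.

Lemma reflection_to_row n (u : 'rV[R]_n.+1) : (u *m u^T) 0 0 = 1 ->
  exists H : 'M[R]_n.+1, [/\ H^T = H, H *m H = 1%:M & row 0 H = u].
Proof.
move=> u1; set e : 'rV[R]_n.+1 := delta_mx 0 0.
have [->|u_neq_e] := eqVneq u e.
  by exists 1%:M; rewrite trmx1 mulmx1 rowE mulmx1.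
have dot_e (v : 'rV[R]_n.+1) : (v *m e^T) 0 0 = v 0 0.
  by rewrite trmx_delta -colE mxE.
have e_dot (v : 'rV[R]_n.+1) : (e *m v^T) 0 0 = v 0 0.
  by rewrite -[e *m _]trmxK trmx_mul trmxK mxE dot_e.
set w := u - e; set c := (w *m w^T) 0 0.
have c_neq0 : c != 0 by rewrite mulmx_trmx_eq0 subr_eq0.
have w00 : w 0 0 = u 0 0 - 1 by rewrite !mxE eqxx.
have cE : c = - 2 * w 0 0.
  move: (dot_e u) (e_dot u) (e_dot e) u1; rewrite /c /w linearB /= mulmxBl !mulmxBr.
  by rewrite w00 !mxE /=; lra.
(* H is the reflection across the hyperplane orthogonal to w = u - e. *)
exists (1%:M - (2 / c) *: (w^T *m w)); split.
- by rewrite linearB /= linearZ /= trmx1 trmx_mul trmxK.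
- have ww : w^T *m w *m (w^T *m w) = c *: (w^T *m w).
    by rewrite -mulmxA (mulmxA w) [w *m w^T]mx11_scalar mul_scalar_mx -scalemxAr.
  move: (w^T *m w) ww => W WW.
  rewrite mulmxBl !mulmxBr mul1mx mulmx1 -!scalemxAl -!scalemxAr WW !scalerA.
  have -> : 2 / c * (2 / c) * c = 2 / c + 2 / c by field.
  by rewrite mul1mx scalerDl opprD !addrA opprK -(addrA 1%:M) -opprD subrK.
- rewrite rowE mulmxBr mulmx1 -scalemxAr mulmxA [e *m w^T]mx11_scalar e_dot.
  rewrite mul_scalar_mx scalerA.
  have -> : 2 / c * w 0 0 = -1.
    by rewrite cE; field; apply: contra_neq c_neq0 => w0; rewrite cE w0 mulr0.
  by rewrite scaleN1r opprK addrC subrK.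
Qed.

Lemma symmetric_orthogonal_diag n (A : 'M[R]_n) : A^T = A ->
  exists (U : 'M[R]_n) (d : 'rV[R]_n), U *m U^T = 1%:M /\ A = U^T *m diag_mx d *m U.
Proof.
elim: n A => [|n IH] A symA.
  by exists 1%:M, 0; split; apply/matrixP => -[].
have [l [u0 [u0_neq0 u0A]]] := symmetric_eigenvector symA.
have [u [u1 uA]] : exists u : 'rV[R]_n.+1, (u *m u^T) 0 0 = 1 /\ u *m A = l *: u.
  have u0_gt0 : 0 < (u0 *m u0^T) 0 0.
    by rewrite lt_def mulmx_trmx_eq0 u0_neq0 mulmx_trmx_ge0.
  exists ((Num.sqrt ((u0 *m u0^T) 0 0))^-1 *: u0); split.
    rewrite linearZ /= -scalemxAl -scalemxAr scalerA mxE.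
    by rewrite -expr2 exprVn sqr_sqrtr ?ltW // mulVf ?lt0r_neq0.
  by rewrite -scalemxAl u0A scalerA mulrC -scalerA.
have [H [symH HH Hu]] := reflection_to_row u1.
(* Conjugating by H moves the eigenvector u to the first basis vector. *)
pose B : 'M[R]_(1 + n) := H *m A *m H.
have BE : B = H *m A *m H by [].
clearbody B.
have symB : B^T = B by rewrite BE !trmx_mul symH symA mulmxA.
have B0 j : B 0 j = l * (0 == j)%:R.
  have : row 0 B = l *: delta_mx 0 0.
    by rewrite BE !row_mul Hu uA -scalemxAl -Hu -row_mul HH rowE mulmx1.
  by move/rowP/(_ j); rewrite !mxE eqxx eq_sym.
have B_block : B = block_mx l%:M 0 0 (drsubmx B).
  have l0 : lshift n (0 : 'I_1) = 0 by apply: val_inj.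
  rewrite -[LHS](submxK B); congr block_mx; apply/matrixP => i j; rewrite !ord1 !mxE l0.
  - by rewrite B0 mulr1.
  - by rewrite B0 mulr0n mulr0.
  - by rewrite -symB mxE B0 mulr0n mulr0.
have [V [d [VV Bd]]] : exists (V : 'M[R]_n) (d : 'rV[R]_n),
    V *m V^T = 1%:M /\ drsubmx B = V^T *m diag_mx d *m V.
  by apply: IH; rewrite trmx_drsub symB.
pose G : 'M[R]_(1 + n) := block_mx 1%:M 0 0 V.
have GG : G *m G^T = 1%:M.
  rewrite tr_block_mx mulmx_block !trmx0 trmx1 !mulmx0 !mul0mx !addr0 !add0r.
  by rewrite mulmx1 VV -scalar_mx_block.
exists (G *m H), (row_mx l%:M d); split.
  by rewrite trmx_mul symH mulmxA -(mulmxA G) HH mulmx1 GG.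
have GBG : B = G^T *m diag_mx (row_mx l%:M d) *m G.
  rewrite B_block tr_block_mx diag_mx_row !trmx0 !trmx1 !mulmx_block.
  rewrite !mulmx0 !mul0mx !addr0 !add0r !mulmx1 !mul1mx -Bd mul0mx.
  by congr block_mx; apply/matrixP => i j; rewrite !ord1 !mxE.
have -> : A = H *m B *m H by rewrite BE !mulmxA HH mul1mx -mulmxA HH mulmx1.
by rewrite GBG trmx_mul symH !mulmxA.
Qed.
End RealSpectral.

Lemma eigvals_eigdecomp (R : realType) n (X : 'M[R]_n) : X^T = X ->
  eigdecomp X (eigvals X).
Proof.
move=> /symmetric_orthogonal_diag [U [d [UU XE]]].
by apply: xgetPex; exists d, U.
Qed.

Section Entropy.
Variable R : realType.

Definition ent (x : R) : R := xlogx x - x.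

Lemma ent0 : ent 0 = 0.
Proof. by rewrite /ent /xlogx eqxx subr0. Qed.

Lemma ent_tangent (x y : R) : 0 < x -> 0 <= y -> ent x + ln x * (y - x) <= ent y.
Proof.
move=> x_gt0; rewrite le_eqVlt => /predU1P[<-|y_gt0].
  by rewrite ent0 /ent /xlogx gt_eqF //; lra.
rewrite /ent /xlogx !gt_eqF //.
(* [ln (x / y) <= x / y - 1], multiplied by [y] *)
have xy_gt0 := divr_gt0 x_gt0 y_gt0.
have : ln (1 + (x / y - 1)) <= x / y - 1 by apply: le_ln1Dx; lra.
rewrite addrC subrK ln_div ?posrE // -(ler_pM2l y_gt0) mulrBr mulrBr mulrCA.
by rewrite divff ?gt_eqF // mulr1; lra.
Qed.

(* Weights of total mass at most 1 suffice because [ent 0 = 0]. *)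
Lemma ent_jensen (I : finType) (w y : I -> R) :
  (forall i, 0 <= w i) -> (forall i, 0 <= y i) -> \sum_i w i <= 1 ->
  ent (\sum_i w i * y i) <= \sum_i w i * ent (y i).
Proof.
move=> w_ge0 y_ge0 w_le1; set x := \sum_i w i * y i.
have wy_ge0 i : 0 <= w i * y i by rewrite mulr_ge0.
have [x0|x_gt0] := eqVneq x 0.
  rewrite x0 ent0; apply: sumr_ge0 => i _.
  have /eqP := @psumr_eq0P _ _ _ (fun i => w i * y i) (fun i _ => wy_ge0 i) x0 i isT.
  by rewrite mulf_eq0 => /orP[/eqP->|/eqP->]; rewrite ?ent0 ?mul0r ?mulr0.
have {}x_gt0 : 0 < x by rewrite lt_def x_gt0 sumr_ge0.
have tangent i := ler_wpM2l (w_ge0 i) (ent_tangent x_gt0 (y_ge0 i)).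
apply: le_trans (ler_sum _ (fun i _ => tangent i)).
have -> : \sum_i w i * (ent x + ln x * (y i - x)) =
    (\sum_i w i) * (ent x - ln x * x) + ln x * x.
  rewrite (eq_bigr (fun i => w i * (ent x - ln x * x) + ln x * (w i * y i))).
    by rewrite big_split /= -mulr_suml -mulr_sumr.
  by move=> i _; ring.
have : (\sum_i w i) * x <= x by rewrite ler_piMl // ltW.
rewrite /ent /xlogx gt_eqF //; nra.
Qed.

End Entropy.

Lemma psd_entry_le (R : realType) n (X : 'M[R]_n) a b :
  psd X -> 2 * X a b <= X a a + X b b.
Proof.
move=> [symX /(_ (delta_mx a 0 - delta_mx b 0))].
have symab : X b a = X a b by rewrite -[in LHS]symX mxE.
move: (delta_mx_quad X a a) (delta_mx_quad X a b).
move: (delta_mx_quad X b a) (delta_mx_quad X b b); rewrite !linearB /= !mulmxBl.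
(* Name the four quadratic forms so that [mxE] only splits their combination. *)
set Xaa := _ *m delta_mx a 0; set Xab := _ *m delta_mx b 0.
set Xba := _ *m delta_mx a 0; set Xbb := _ *m delta_mx b 0.
rewrite !mxE; lra.
Qed.

Lemma correlation_entry_le1 (R : realType) n (X : 'M[R]_n) a b :
  (forall l, X l l = 1) -> psd X -> X a b <= 1.
Proof. by move=> X1 /(psd_entry_le a b); rewrite !X1; lra. Qed.

Lemma psd_eigdecomp_ge0 (R : realType) n (X U : 'M[R]_n) (d : 'rV[R]_n) k :
  psd X -> U *m U^T = 1%:M -> X = U^T *m diag_mx d *m U -> 0 <= d 0 k.
Proof.
move=> [_ /(_ (U^T *m delta_mx k 0))] + UU XE; rewrite XE.
rewrite trmx_mul trmxK !mulmxA -(mulmxA _ U) UU mulmx1 -(mulmxA _ U) UU mulmx1.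
by rewrite delta_mx_quad mxE eqxx mulr1n.
Qed.

Section Assignment.
Variables (R : realType) (L M : nat) (g : 'I_L -> 'I_M).

Definition assign_mx : 'M[R]_(L, M) := \matrix_(a, j) (g a == j)%:R.
Local Notation P := assign_mx.
Local Notation Q := (P *m P^T).

Definition fibre_size j : R := \sum_a (g a == j)%:R.

Lemma sum_label_indicator a : \sum_j ((g a == j)%:R : R) = 1.
Proof.
rewrite (bigD1 (g a)) //= eqxx big1 ?addr0 // => j /negPf gaj.
by rewrite eq_sym gaj.
Qed.

Lemma sum_fibre_size : \sum_j fibre_size j = L%:R.
Proof.
rewrite exchange_big /= (eq_bigr (fun=> 1)) ?sumr_const ?card_ord //.
by move=> a _; rewrite sum_label_indicator.
Qed.

Lemma fibre_size_ge0 j : 0 <= fibre_size j.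
Proof. by apply: sumr_ge0 => a _; rewrite ler0n. Qed.

Lemma assign_gramE a b : Q a b = (g a == g b)%:R.
Proof.
rewrite mxE (bigD1 (g a)) //= big1 ?addr0 => [|j /negPf gaj].
  by rewrite !mxE eqxx mul1r eq_sym.
by rewrite !mxE eq_sym gaj mul0r.
Qed.

Lemma assign_gram_psd : psd Q.
Proof.
split=> [|v]; first by rewrite trmx_mul trmxK.
have -> : v^T *m Q *m v = (P^T *m v)^T *m (P^T *m v)^T^T.
  by rewrite trmxK trmx_mul trmxK !mulmxA.
exact: mulmx_trmx_ge0.
Qed.

Lemma tr_assign_gram_gap (X : 'M[R]_L) : \tr (Q *m Q) - \tr (Q *m X) =
  \sum_a \sum_b (g a == g b)%:R * (1 - X b a).
Proof.
rewrite -sumrB; apply: eq_bigr => a _; rewrite !mxE -sumrB.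
apply: eq_bigr => b _; rewrite !assign_gramE eq_sym.
by case: (g b == g a); rewrite ?mul0r ?mul1r ?subrr.
Qed.

Section Optimality.
Variable X : 'M[R]_L.
Hypotheses (X1 : forall l, X l l = 1) (psdX : psd X).

Let gap_term_ge0 a b : 0 <= (g a == g b)%:R * (1 - X b a).
Proof. by rewrite mulr_ge0 ?ler0n // subr_ge0 correlation_entry_le1. Qed.

Lemma tr_assign_gram_le : \tr (Q *m X) <= \tr (Q *m Q).
Proof.
rewrite -subr_ge0 tr_assign_gram_gap.
by apply: sumr_ge0 => a _; apply: sumr_ge0 => b _; apply: gap_term_ge0.
Qed.

Lemma tr_assign_gram_eq a b :
  \tr (Q *m X) = \tr (Q *m Q) -> g a = g b -> X a b = 1.
Proof.
move=> trE gab.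
have gap0 : \sum_b \sum_a (g b == g a)%:R * (1 - X a b) = 0.
  by rewrite -tr_assign_gram_gap trE subrr.
have row_ge0 c : 0 <= \sum_a (g c == g a)%:R * (1 - X a c).
  by apply: sumr_ge0 => ? _; apply: gap_term_ge0.
have := @psumr_eq0P _ _ _ _ (fun c _ => row_ge0 c) gap0 b isT.
move/(@psumr_eq0P _ _ _ _ (fun a _ => gap_term_ge0 b a))/(_ a isT)/eqP.
by rewrite gab eqxx mul1r subr_eq0 => /eqP.
Qed.

End Optimality.

Section FibreWeights.
Variable U : 'M[R]_L.
Hypothesis UU : U *m U^T = 1%:M.

Definition fibre_weight j k := (U *m P) k j ^+ 2 / fibre_size j.

Lemma UP_entry k j : (U *m P) k j = \sum_a (g a == j)%:R * U k a.
Proof. by rewrite mxE; apply: eq_bigr => a _; rewrite mxE mulrC. Qed.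

Lemma sum_sqr_UP j : \sum_k (U *m P) k j ^+ 2 = fibre_size j.
Proof.
rewrite -trmx_mul_self_diag trmx_mul -mulmxA (mulmxA U^T) (mulmx1C UU) mul1mx.
rewrite trmx_mul_self_diag; apply: eq_bigr => a _.
by rewrite mxE; case: (g a == j); rewrite ?expr0n ?expr1n.
Qed.

Lemma fibre_weight_ge0 j k : 0 <= fibre_weight j k.
Proof. by rewrite divr_ge0 ?sqr_ge0 ?fibre_size_ge0. Qed.

Lemma sum_fibre_weight j : \sum_k fibre_weight j k = (fibre_size j != 0)%:R.
Proof.
rewrite -mulr_suml sum_sqr_UP.
by have [->|c_neq0] := eqVneq (fibre_size j) 0; rewrite ?mul0r ?divff.
Qed.

Lemma fibre_weightK j k : fibre_weight j k * fibre_size j = (U *m P) k j ^+ 2.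
Proof.
have [c0|c_neq0] := eqVneq (fibre_size j) 0; last by rewrite mulfVK.
have := sum_sqr_UP j; rewrite c0 mulr0 => /psumr_eq0P -> //.
by move=> i _; rewrite sqr_ge0.
Qed.

(* Cauchy-Schwarz within each fibre, then orthonormality of the rows of U. *)
Lemma sum_fibre_weight_le1 k : \sum_j fibre_weight j k <= 1.
Proof.
have weight_le j : fibre_weight j k <= \sum_a (g a == j)%:R * U k a ^+ 2.
  have [c0|c_neq0] := eqVneq (fibre_size j) 0.
    by rewrite /fibre_weight c0 invr0 mulr0 sumr_ge0 // => a _; rewrite mulr_ge0 ?sqr_ge0.
  have c_gt0 : 0 < fibre_size j by rewrite lt_def c_neq0 fibre_size_ge0.
  rewrite /fibre_weight ler_pdivrMr // mulrC UP_entry.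
  by apply: weighted_sqr_sum_le => a; rewrite ler0n.
apply: le_trans (ler_sum _ (fun j _ => weight_le j)) _.
rewrite exchange_big /= (eq_bigr (fun a => U k a ^+ 2)).
  by have /matrixP/(_ k k) := UU; rewrite mul_trmx_self_diag mxE eqxx => ->.
by move=> a _; rewrite -mulr_suml sum_label_indicator mul1r.
Qed.

Lemma entropy_assign_gram_le (e : 'rV[R]_L) :
  Q = U^T *m diag_mx e *m U -> \sum_k ent (e 0 k) <= \sum_j ent (fibre_size j).
Proof.
move=> QE.
have eE k : e 0 k = \sum_j fibre_weight j k * fibre_size j.
  have <- : (U *m Q *m U^T) k k = e 0 k.
    by rewrite QE !mulmxA UU mul1mx -mulmxA UU mulmx1 mxE eqxx mulr1n.
  rewrite !mulmxA -(mulmxA (U *m P)) -trmx_mul mul_trmx_self_diag.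
  by apply: eq_bigr => j _; rewrite fibre_weightK.
apply: le_trans (_ : \sum_k \sum_j fibre_weight j k * ent (fibre_size j) <= _).
  apply: ler_sum => k _; rewrite eE; apply: ent_jensen => [j|j|].
  - exact: fibre_weight_ge0.
  - exact: fibre_size_ge0.
  - exact: sum_fibre_weight_le1.
rewrite exchange_big /=; apply: ler_sum => j _; rewrite -mulr_suml sum_fibre_weight.
by have [->|] := eqVneq (fibre_size j) 0; rewrite ?ent0 ?mulr0 ?mul1r.
Qed.

Section EntropyLowerBound.
Variables (X : 'M[R]_L) (d : 'rV[R]_L).
Hypotheses (X1 : forall l, X l l = 1) (psdX : psd X).
Hypotheses (X_fibre : forall a b, g a = g b -> X a b = 1).
Hypothesis XE : X = U^T *m diag_mx d *m U.

Lemma fibre_weight_mean j : \sum_k fibre_weight j k * d 0 k = fibre_size j.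
Proof.
have quadE : (P^T *m X *m P) j j = fibre_size j * \sum_k fibre_weight j k * d 0 k.
  rewrite mulr_sumr (eq_bigr (fun k => (U *m P) k j ^+ 2 * d 0 k)); last first.
    by move=> k _; rewrite mulrA [_ * fibre_weight _ _]mulrC fibre_weightK.
  by rewrite -diag_quad_diag trmx_mul XE !mulmxA.
have : (P^T *m X *m P) j j = fibre_size j * fibre_size j.
  rewrite mxE /fibre_size mulr_suml; apply: eq_bigr => b _.
  rewrite mxE mulr_suml mulr_sumr; apply: eq_bigr => a _; rewrite !mxE.
  have [gaj|] := eqVneq (g a) j; last by rewrite mul0r mulr0 mul0r.
  have [gbj|] := eqVneq (g b) j; last by rewrite !mulr0 mul0r.
  by rewrite X_fibre ?gaj ?gbj // !mul1r.
rewrite quadE; have [c0|c_neq0] := eqVneq (fibre_size j) 0; last by move/(mulfI c_neq0).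
rewrite c0 => _; apply: big1 => k _.
by rewrite /fibre_weight c0 invr0 !mulr0 mul0r.
Qed.

(* The weights [s k = \sum_j fibre_weight j k <= 1] satisfy
   [\sum_k s k * d 0 k = \sum_j fibre_size j = L = \tr X = \sum_k d 0 k],
   so [s k = 1] wherever [d 0 k != 0]. *)
Lemma fibre_weight_full k : (\sum_j fibre_weight j k) * d 0 k = d 0 k.
Proof.
have d_ge0 k' := psd_eigdecomp_ge0 k' psdX UU XE.
have trd : \sum_k d 0 k = L%:R.
  have <- : \tr X = L%:R.
    by rewrite /mxtrace (eq_bigr (fun=> 1)) ?sumr_const ?card_ord.
  by rewrite XE mxtrace_mulC mulmxA UU mul1mx mxtrace_diag.
have term_ge0 k' : 0 <= (1 - \sum_j fibre_weight j k') * d 0 k'.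
  by rewrite mulr_ge0 // subr_ge0 sum_fibre_weight_le1.
have gap0 : \sum_k (1 - \sum_j fibre_weight j k) * d 0 k = 0.
  under eq_bigr do rewrite mulrBl mul1r mulr_suml.
  rewrite sumrB exchange_big /= trd.
  by under eq_bigr do rewrite fibre_weight_mean; rewrite sum_fibre_size subrr.
have /eqP := @psumr_eq0P _ _ _ _ (fun k _ => term_ge0 k) gap0 k isT.
by rewrite mulrBl mul1r subr_eq0 => /eqP.
Qed.

Lemma entropy_ge_fibres : \sum_j ent (fibre_size j) <= \sum_k ent (d 0 k).
Proof.
apply: le_trans (_ : \sum_j \sum_k fibre_weight j k * ent (d 0 k) <= _).
  apply: ler_sum => j _; rewrite -fibre_weight_mean; apply: ent_jensen => [k|k|].
  - exact: fibre_weight_ge0.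
  - exact: psd_eigdecomp_ge0 psdX UU XE.
  - by rewrite sum_fibre_weight lern1 leq_b1.
rewrite exchange_big /=; apply: ler_sum => k _; rewrite -mulr_suml.
have := fibre_weight_full k; have [->|] := eqVneq (d 0 k) 0; first by rewrite ent0 mulr0.
by move=> d_neq0; rewrite -[X in _ = X]mul1r => /(mulIf d_neq0) ->; rewrite mul1r.
Qed.

End EntropyLowerBound.

End FibreWeights.

Lemma assign_gram_optimal (feas : 'M[R]_L -> Prop) : feas Q ->
  (forall X, feas X -> (forall l, X l l = 1) /\ psd X) ->
  optimal_min_entropy feas Q Q.
Proof.
move=> feasQ feas_corr; split=> // X /feas_corr [X1 psdX]; first exact: tr_assign_gram_le.
move=> trE; have [U [UU QE]] := eigvals_eigdecomp assign_gram_psd.1.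
have [V [VV XE]] := eigvals_eigdecomp psdX.1.
apply: le_trans (entropy_assign_gram_le UU QE) (entropy_ge_fibres VV X1 psdX _ XE).
by move=> a b; apply: tr_assign_gram_eq.
Qed.

End Assignment.

Section Stacking.
Variables (R : realType) (N M : nat) (K : 'I_N -> nat).
Variable F : forall i, 'I_(K i) -> 'I_M.

Definition stack_label (a : 'I_(\sum_i K i)) : 'I_M :=
  @F (tagnat.sig1 a) (tagnat.sig2 a).

Lemma stack_label_Rank i r : stack_label (tagnat.Rank i r) = @F i r.
Proof. by rewrite /stack_label /tagnat.sig1 /tagnat.sig2 /tagnat.Rank tagnat.rankK. Qed.

Lemma mxcol_assign_mx :
  \mxcol_i assign_mx R (@F i) = assign_mx R stack_label.
Proof. by apply/matrixP => a j; rewrite !mxE. Qed.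

Lemma submxblock_stack_gram i : injective (@F i) ->
  submxblock (assign_mx R stack_label *m (assign_mx R stack_label)^T) i i = 1%:M.
Proof.
move=> Fi; apply/matrixP => r s.
by rewrite [LHS]mxE assign_gramE !stack_label_Rank (inj_eq Fi) mxE.
Qed.

End Stacking.

Lemma submxblock1_diag (R : pzRingType) N (K : 'I_N -> nat) (X : 'M[R]_(\sum_i K i)) :
  (forall i, submxblock X i i = 1%:M) -> forall l, X l l = 1.
Proof.
move=> X1 l; have /matrixP/(_ (tagnat.sig2 l) (tagnat.sig2 l)) := X1 (tagnat.sig1 l).
by rewrite !mxE tagnat.sig2K eqxx.
Qed.

Lemma mxtrace_const_avg (R : numFieldType) k : (0 < k)%N ->
  \tr (const_mx (1 / k%:R) : 'M[R]_k) = 1.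
Proof.
move=> k_gt0; rewrite /mxtrace (eq_bigr (fun=> 1 / k%:R)) => [|l _]; last by rewrite mxE.
by rewrite sumr_const card_ord div1r -[_ *+ k]mulr_natr mulVf // pnatr_eq0 -lt0n.
Qed.

Theorem theorem1 (R : realType) (N : nat) (K : 'I_N -> nat) (M : nat)
  (P_ : forall i : 'I_N, 'M[R]_(K i, M)) :
  (1 <= N)%N -> (forall i, (0 < K i)%N) -> (1 <= M)%N ->
  (forall i, row_partial_perm (P_ i)) ->
  let P : 'M[R]_(\sum_i K i, M) := \mxcol_i P_ i in
  let Q := P *m P^T in
  [/\ optimal_min_entropy (@strong_feas R N K) Q Q,
      optimal_min_entropy (@weak_feas R N K) Q Q &
      optimal_min_entropy (@gw_feas R N K) Q Q].
Proof.
move=> _ K_gt0 _ perm_P P Q.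
pose F i := projT1 (cid (perm_P i)).
have [F_inj PF] : (forall i, injective (F i)) /\ forall i, P_ i = assign_mx R (F i).
  by split=> i; case: (projT2 (cid (perm_P i))).
have QE : Q = assign_mx R (stack_label F) *m (assign_mx R (stack_label F))^T.
  by rewrite /Q /P (eq_mxcol PF) mxcol_assign_mx.
have Q1 l : Q l l = 1 by rewrite QE assign_gramE eqxx.
have psdQ : psd Q by rewrite QE; apply: assign_gram_psd.
have blockQ i : submxblock Q i i = 1%:M by rewrite QE submxblock_stack_gram.
rewrite QE in Q1 psdQ blockQ *; split; apply: assign_gram_optimal.
- exact: conj blockQ psdQ.
- by move=> X [/submxblock1_diag X1 psdX].
- split=> //; split=> // i.
  by rewrite blockQ mul1mx mxtrace_const_avg.
- by move=> X [X1 [_ psdX]].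
- exact: conj Q1 psdQ.
- by [].
Qed.
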